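(* The projective Fraïssé limit $\mathbb G$ is pointwise self-isomorphic: for every vertex $x$ of $\mathbb G$ and every neighborhood $U$ of $x$ there is a topological subgraph $V$ of $\mathbb G$ with $x\in V\subseteq U$ that is isomorphic to $\mathbb G$.
   Context: A graph is a pair $A=(V(A),E(A))$ with $E(A)\subseteq V(A)^2$ reflexive and symmetric; a topological graph additionally has $V$ compact, second countable, zero-dimensional and $E$ closed; subgraphs carry the induced edge relation. Epimorphisms are (continuous) edge-preserving maps surjective on vertices and edges; an isomorphism is an injective epimorphism. A vertex set $S$ is disconnected if it splits into two nonempty closed subsets with no edges between them; otherwise connected; components are maximal connected subsets. An epimorphism $f\colon A\to B$ is confluent if for every connected $Q\subseteq V(B)$ each component $C$ of $f^{-1}(Q)$ has $f(C)=Q$. $\mathbb G$ is the projective Fraïssé limit of the class of finite connected graphs with confluent epimorphisms: the unique topological graph such that (1) every finite connected graph is a confluent epimorphic image of $\mathbb G$; (2) for finite connected $A,B$ and confluent epimorphisms $f\colon\mathbb G\to A$, $g\colon B\to A$ there is a confluent epimorphism $h\colon\mathbb G\to B$ with $f=g\circ h$; (3) for each $\varepsilon>0$ some confluent epimorphism from $\mathbb G$ onto a finite connected graph has all point-preimages of diameter $<\varepsilon$. *)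

From HB Require Import structures.
From mathcomp Require Import all_boot all_order all_algebra.
From mathcomp Require Import all_classical all_reals all_analysis.
Set Implicit Arguments. Unset Strict Implicit. Unset Printing Implicit Defensive.
Import Order.TTheory GRing.Theory Num.Theory.
Local Open Scope classical_set_scope.
Local Open Scope ring_scope.

(* Graph-theoretic connectedness of a vertex set S, relative to a notion
   [clo] of closed sets of the ambient vertex space (the topology's closed
   sets for topological graphs, all sets for finite (discrete) graphs).
   "Closed subsets" of S are taken relative to S. *)
Definition gdisconnected {X : Type} (clo : set X -> Prop)
  (E : X -> X -> Prop) (S : set X) : Prop :=
  exists A B : set X,
    [/\ A `|` B = S, A `&` B = set0, A !=set0 & B !=set0] /\
    [/\ (exists C, clo C /\ A = C `&` S),
        (exists D, clo D /\ B = D `&` S)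
      & forall a b, A a -> B b -> ~ E a b].

Definition gconnected {X : Type} (clo : set X -> Prop)
  (E : X -> X -> Prop) (S : set X) : Prop := ~ gdisconnected clo E S.

Definition gcomponent {X : Type} (clo : set X -> Prop)
  (E : X -> X -> Prop) (S C : set X) : Prop :=
  [/\ C `<=` S, gconnected clo E C &
      forall D, C `<=` D -> D `<=` S -> gconnected clo E D -> D = C].

Definition epi {X Y : Type} (EX : X -> X -> Prop) (EY : Y -> Y -> Prop)
  (f : X -> Y) : Prop :=
  [/\ (forall u v, EX u v -> EY (f u) (f v)),
      (forall y, exists x, f x = y)
    & (forall a b, EY a b -> exists u v, [/\ EX u v, f u = a & f v = b])].

Definition confluent {X Y : Type} (cloX : set X -> Prop) (EX : X -> X -> Prop)
  (cloY : set Y -> Prop) (EY : Y -> Y -> Prop) (f : X -> Y) : Prop :=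
  epi EX EY f /\
  forall Q : set Y, gconnected cloY EY Q ->
    forall C, gcomponent cloX EX (f @^-1` Q) C -> f @` C = Q.

Definition fin_closed (A : finType) : set A -> Prop := fun _ => True.

Definition fin_conn_graph (A : finType) (EA : rel A) : Prop :=
  [/\ (0 < #|A|)%N, reflexive EA, symmetric EA &
      gconnected (@fin_closed A) (fun a b => EA a b) setT].

Definition top_graph (T : topologicalType) (E : T -> T -> Prop) : Prop :=
  [/\ compact [set: T], @second_countable T & zero_dimensional T] /\
  [/\ closed [set p : T * T | E p.1 p.2],
      (forall x, E x x) & (forall x y, E x y -> E y x)].

Definition cont_fin {T : topologicalType} {A : finType} (f : T -> A) : Prop :=
  forall a : A, open (f @^-1` [set a]).

Definition conf_epi_fin {T : topologicalType} (E : T -> T -> Prop)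
  {A : finType} (EA : rel A) (f : T -> A) : Prop :=
  cont_fin f /\ confluent closed E (@fin_closed A) (fun a b => EA a b) f.

Definition is_Fraisse_limit {R : realType} (T : pseudoMetricType R)
  (E : T -> T -> Prop) : Prop :=
  [/\ top_graph E,
      (forall (A : finType) (EA : rel A), fin_conn_graph EA ->
         exists f : T -> A, conf_epi_fin E EA f),
      (forall (A B : finType) (EA : rel A) (EB : rel B),
         fin_conn_graph EA -> fin_conn_graph EB ->
         forall (f : T -> A) (g : B -> A),
         conf_epi_fin E EA f ->
         confluent (@fin_closed B) (fun a b => EB a b)
                   (@fin_closed A) (fun a b => EA a b) g ->
         exists h : T -> B, conf_epi_fin E EB h /\ f = g \o h)
    &
      (forall eps : R, 0 < eps ->
         exists (A : finType) (EA : rel A) (f : T -> A),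
           [/\ fin_conn_graph EA, conf_epi_fin E EA f &
               forall a p q, f p = a -> f q = a -> ball p eps q])].

Definition iso_onto_subgraph {T : topologicalType} (E : T -> T -> Prop)
  (V : set T) : Prop :=
  exists h : T -> T,
    [/\ continuous h, injective h, h @` setT = V,
        (forall u v, E u v -> E (h u) (h v)) &
        (forall a b, V a -> V b -> E a b ->
           exists u v, [/\ E u v, h u = a & h v = b])].

From HB Require Import structures.
From mathcomp Require Import all_boot all_order all_algebra.
From mathcomp Require Import all_classical all_reals all_analysis.
From mathcomp Require Import lra.
Import Order.TTheory GRing.Theory Num.Theory.
Local Open Scope classical_set_scope.
Local Open Scope ring_scope.
Set Implicit Arguments. Unset Strict Implicit. Unset Printing Implicit Defensive.

(* Pick a confluent f : G -> A with fibres of diameter < e and let V be the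
   component of x in f^-1(f x); V is closed and lies in U.  We then build stages
   (Psi_n : G -> C_n, D_n, phi_n : G -> D_n): Psi_n and phi_n are confluent, D_n
   is an induced subgraph of C_n, V is a component of Psi_n^-1(D_n), and each
   stage factors through the next one.  To make phi_n finer, cut D_n out of C_n
   and glue in its place a fine image of G mapping onto D_n; to make Psi_n finer
   on V, replace C_n by a fine image of G and D_n by the component over D_n that
   contains the image of V.  In both cases property (2) lifts the old maps to
   the new graphs.  Sending t to the unique point of V that lies over phi_n t at
   every stage is then an isomorphism of G onto V. *)

(** * Connectedness in graphs *)

Section GraphConnectivity.
Context {X : Type} (clo : set X -> Prop) (E : X -> X -> Prop).

Definition gseparation (S P Q : set X) := [/\ P `|` Q = S, P `&` Q = set0,
  (exists C, clo C /\ P = C `&` S), (exists D, clo D /\ Q = D `&` S) &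
  forall a b, P a -> Q b -> ~ E a b].

Lemma gdisconnectedP S : gdisconnected clo E S <->
  exists P Q, [/\ gseparation S P Q, P !=set0 & Q !=set0].
Proof.
split; first by move=> [P [Q [[PQ PQ0 nP nQ] [hC hD nE]]]]; exists P, Q.
by move=> [P [Q [[PQ PQ0 hC hD nE] nP nQ]]]; exists P, Q.
Qed.

Lemma gseparation_disj S P Q y : gseparation S P Q -> P y -> Q y -> False.
Proof. by move=> [_ PQ0 _ _ _] Py Qy; have : (P `&` Q) y by []; rewrite PQ0. Qed.

Lemma gconnected_subU S C D : gconnected clo E S -> clo C -> clo D ->
  S `<=` C `|` D -> S `&` C `&` D = set0 ->
  (forall a b, S a -> S b -> C a -> D b -> ~ E a b) -> S `<=` C \/ S `<=` D.
Proof.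
move=> cS cC cD SCD SCD0 nE; apply: contrapT.
move=> /not_orP[/existsNP[a /not_implyP[Sa nCa]] /existsNP[b /not_implyP[Sb nDb]]].
apply/cS/gdisconnectedP; exists (C `&` S), (D `&` S); split; first split.
- apply/seteqP; split=> [z [[]|[]]|z Sz] //.
  by have [] := SCD _ Sz; [left|right].
- by apply/seteqP; split=> // z [[Cz Sz] [Dz _]]; rewrite -SCD0.
- by exists C.
- by exists D.
- by move=> u v [Cu Su] [Dv Sv]; apply: nE.
- by exists b; split => //; have [] := SCD _ Sb.
- by exists a; split => //; have [] := SCD _ Sa.
Qed.

Lemma gconnected_sub_separation Y S P Q : gconnected clo E Y -> Y `<=` S ->
  gseparation S P Q -> Y `<=` P \/ Y `<=` Q.
Proof.
move=> cY YS sp; have [PQ _ [C [cC PC]] [D [cD QD]] nE] := sp.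
have PCS z : S z -> C z -> P z by move=> Sz Cz; rewrite PC.
have QDS z : S z -> D z -> Q z by move=> Sz Dz; rewrite QD.
have YCD : Y `<=` C `|` D.
  move=> y /YS Sy; have : (P `|` Q) y by rewrite PQ.
  by case=> [|]; [rewrite PC => -[]; left | rewrite QD => -[]; right].
have YCD0 : Y `&` C `&` D = set0.
  apply/seteqP; split => // y [[Yy Cy] Dy]; apply: (gseparation_disj sp).
  + exact: PCS (YS _ Yy) Cy.
  + exact: QDS (YS _ Yy) Dy.
have nEY a b : Y a -> Y b -> C a -> D b -> ~ E a b.
  by move=> Ya Yb Ca Db; apply: nE; [apply: PCS (YS _ Ya) Ca | apply: QDS (YS _ Yb) Db].
have [YC|YD] := gconnected_subU cY cC cD YCD YCD0 nEY.
- by left => y Yy; apply: PCS (YS _ Yy) (YC _ Yy).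
- by right => y Yy; apply: QDS (YS _ Yy) (YD _ Yy).
Qed.

Lemma gconnected_star K p :
  (forall z, K z -> exists Y, [/\ Y `<=` K, gconnected clo E Y, Y p & Y z]) ->
  gconnected clo E K.
Proof.
move=> hK /gdisconnectedP [P [Q [sp [a Pa] [b Qb]]]].
have [PQ _ _ _ _] := sp.
have [Y [YK cY Yp Ya]] : exists Y, [/\ Y `<=` K, gconnected clo E Y, Y p & Y a].
  by apply: hK; rewrite -PQ; left.
have [Z [ZK cZ Zp Zb]] : exists Z, [/\ Z `<=` K, gconnected clo E Z, Z p & Z b].
  by apply: hK; rewrite -PQ; right.
have [YP|YQ] := gconnected_sub_separation cY YK sp;
  have [ZP|ZQ] := gconnected_sub_separation cZ ZK sp.
- exact: gseparation_disj sp (ZP _ Zb) Qb.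
- exact: gseparation_disj sp (YP _ Yp) (ZQ _ Zp).
- exact: gseparation_disj sp (ZP _ Zp) (YQ _ Yp).
- exact: gseparation_disj sp Pa (YQ _ Ya).
Qed.

Lemma gconnectedU A B : gconnected clo E A -> gconnected clo E B ->
  A `&` B !=set0 -> gconnected clo E (A `|` B).
Proof.
move=> cA cB [p [Ap Bp]]; apply: (@gconnected_star _ p) => z [Az|Bz].
- by exists A; split => // ? ?; left.
- by exists B; split => // ? ?; right.
Qed.

Lemma gconnected_set1 p : gconnected clo E [set p].
Proof.
move=> /gdisconnectedP [P [Q [sp [a Pa] [b Qb]]]].
have [PQ _ _ _ _] := sp.
have : (P `|` Q) a by left.
have : (P `|` Q) b by right.
rewrite PQ => /= bp ap; subst a b.
exact: gseparation_disj sp Pa Qb.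
Qed.

Lemma gconnected_edge a b : E a b -> E b a -> gconnected clo E [set a; b].
Proof.
move=> Eab Eba /gdisconnectedP [P [Q [sp [p Pp] [q Qq]]]].
have [PQ _ _ _ nE] := sp.
have PQab y : y = a \/ y = b -> P y \/ Q y.
  by move=> h; change ((P `|` Q) y); rewrite PQ.
have abP y : P y -> y = a \/ y = b.
  by move=> Py; rewrite -[_ \/ _]/([set a; b] y) -PQ; left.
have abQ y : Q y -> y = a \/ y = b.
  by move=> Qy; rewrite -[_ \/ _]/([set a; b] y) -PQ; right.
have [Pa|Qa] := PQab a (or_introl erefl); have [Pb|Qb] := PQab b (or_intror erefl).
- by case: (abQ _ Qq) => qe; subst q;
    [exact: gseparation_disj sp Pa Qq | exact: gseparation_disj sp Pb Qq].
- exact: nE Pa Qb Eab.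
- exact: nE Pb Qa Eba.
- by case: (abP _ Pp) => pe; subst p;
    [exact: gseparation_disj sp Pp Qa | exact: gseparation_disj sp Pp Qb].
Qed.

Lemma gconnected_cross_edge K C D : gconnected clo E K -> clo C -> clo D ->
  K `<=` C `|` D -> K `&` C `&` D = set0 -> K `&` C !=set0 -> K `&` D !=set0 ->
  exists a b, [/\ K a, K b, C a, D b & E a b].
Proof.
move=> cK cC cD KCD K0 [c [Kc Cc]] [d [Kd Dd]]; apply: contrapT => nex.
have nE a b : K a -> K b -> C a -> D b -> ~ E a b.
  by move=> Ka Kb Ca Db Eab; apply: nex; exists a, b.
have [KC|KD] := gconnected_subU cK cC cD KCD K0 nE.
- have : (K `&` C `&` D) d by split; [split => //; apply: KC|].
  by rewrite K0.
- have : (K `&` C `&` D) c by split; [|apply: KD].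
  by rewrite K0.
Qed.

Definition gcomp S p : set X := fun z =>
  exists Y, [/\ Y `<=` S, gconnected clo E Y, Y p & Y z].

Lemma gcomp_sub S p : gcomp S p `<=` S.
Proof. by move=> z [Y [YS _ _ Yz]]; apply: YS. Qed.

Lemma gcomp_max S p Y : Y `<=` S -> gconnected clo E Y -> Y p -> Y `<=` gcomp S p.
Proof. by move=> YS cY Yp z Yz; exists Y. Qed.

Lemma gcomp_refl S p : S p -> gcomp S p p.
Proof. by move=> Sp; exists [set p]; split => //; [move=> ? -> | apply: gconnected_set1]. Qed.

Lemma gcomp_connected S p : gconnected clo E (gcomp S p).
Proof.
apply: (@gconnected_star _ p) => z [Y [YS cY Yp Yz]].
by exists Y; split => //; apply: gcomp_max.
Qed.

Lemma gcomponent_gcomp S p : S p -> gcomponent clo E S (gcomp S p).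
Proof.
move=> Sp; split; [exact: gcomp_sub | exact: gcomp_connected |].
move=> D cD DS cDc; apply/seteqP; split => //.
by apply: gcomp_max => //; apply: cD; apply: gcomp_refl.
Qed.

Lemma gcomponent_maximal S K Y : gcomponent clo E S K -> Y `<=` S ->
  gconnected clo E Y -> Y `&` K !=set0 -> Y `<=` K.
Proof.
move=> [KS cK mK] YS cY YK.
have -> : K = K `|` Y.
  apply: esym; apply: mK; [by move=> ? ?; left | by move=> z [/KS|/YS] |].
  by apply: gconnectedU => //; rewrite setIC.
by move=> ? ?; right.
Qed.

Lemma gcomponent_neighbour S L z w : gcomponent clo E S L ->
  L z -> S w -> E z w -> E w z -> L w.
Proof.
move=> cL Lz Sw Ezw Ewz; have [LS _ _] := cL.
apply: (gcomponent_maximal cL (Y := [set z; w])); [ | exact: gconnected_edge | | by right].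
- by move=> y [] ->; [apply: LS|].
- by exists z; split => //; left.
Qed.

Lemma gcomponent_neq0 S K z : gcomponent clo E S K -> S z -> K !=set0.
Proof.
move=> [KS cK mK] Sz; apply: contrapT => nK.
have K0 : K = set0 by apply/seteqP; split => // y Ky; apply: nK; exists y.
have Kz : K `<=` [set z] by rewrite K0.
have zS : [set z] `<=` S by move=> ? ->.
by apply: nK; exists z; rewrite -(mK _ Kz zS (@gconnected_set1 z)).
Qed.

Lemma gconnected_edge_closed K A : (forall Z, clo Z) -> gconnected clo E K ->
  A `<=` K -> A !=set0 -> (forall a b, A a -> K b -> E a b -> A b) -> K `<=` A.
Proof.
move=> cloT cK AK [a Aa] Aclosed b Kb; apply: contrapT => nAb.
have [] := @gconnected_cross_edge K A (~` A) cK (cloT _) (cloT _).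
- by move=> y Ky; have [h|h] := pselect (A y); [left|right].
- by apply/seteqP; split => [y [[_ h1] h2]|//]; exact: h2 h1.
- by exists a; split => //; apply: AK.
- by exists b.
by move=> u [v [_ Kv Au nAv Euv]]; apply/nAv/(Aclosed u).
Qed.

End GraphConnectivity.

Section GraphMaps.
Context {X Y : Type} (cloX : set X -> Prop) (EX : X -> X -> Prop)
  (cloY : set Y -> Prop) (EY : Y -> Y -> Prop).

Lemma gconnected_image (f : X -> Y) S :
  (forall Z, cloY Z -> cloX (f @^-1` Z)) -> (forall u v, EX u v -> EY (f u) (f v)) ->
  gconnected cloX EX S -> gconnected cloY EY (f @` S).
Proof.
move=> hclo hE cS /gdisconnectedP [P [Q [sp [p Pp] [q Qq]]]].
have [PQ PQ0 [C [cC PC]] [D [cD QD]] nE] := sp.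
apply/cS/gdisconnectedP; exists (f @^-1` C `&` S), (f @^-1` D `&` S); split; first split.
- apply/seteqP; split => [z [[]|[]] //|z Sz].
  have : (P `|` Q) (f z) by rewrite PQ; exists z.
  by case; [rewrite PC => -[]; left | rewrite QD => -[]; right].
- apply/seteqP; split => // z [[Cz Sz] [Dz _]].
  by apply: (gseparation_disj sp (y := f z)); [rewrite PC | rewrite QD]; split => //; exists z.
- by exists (f @^-1` C); split => //; apply: hclo.
- by exists (f @^-1` D); split => //; apply: hclo.
- move=> u v [Cu Su] [Dv Sv] Euv; apply: (nE (f u) (f v)); last exact: hE.
  + by rewrite PC; split => //; exists u.
  + by rewrite QD; split => //; exists v.
- have : (P `|` Q) p by left.
  rewrite PQ => -[w Sw fw]; exists w; split => //.
  by move: Pp; rewrite PC -fw => -[].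
- have : (P `|` Q) q by right.
  rewrite PQ => -[w Sw fw]; exists w; split => //.
  by move: Qq; rewrite QD -fw => -[].
Qed.

Lemma gconnected_of_image_inj (f : X -> Y) S :
  (forall Z, cloY Z) -> injective f -> (forall a b, EY (f a) (f b) -> EX a b) ->
  gconnected cloY EY (f @` S) -> gconnected cloX EX S.
Proof.
move=> cloT finj hE cS /gdisconnectedP [P [Q [sp [p Pp] [q Qq]]]].
have [PQ _ _ _ nE] := sp.
apply/cS/gdisconnectedP; exists (f @` P), (f @` Q); split; first split.
- by rewrite -image_setU PQ.
- apply/seteqP; split => // z [[u Pu <-] [v Qv]] /finj uv; subst v.
  exact: gseparation_disj sp Pu Qv.
- exists (f @` P); split => //; apply/seteqP; split => [z Pz|z []//].
  by split => //; move: Pz => [u Pu <-]; exists u => //; rewrite -PQ; left.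
- exists (f @` Q); split => //; apply/seteqP; split => [z Qz|z []//].
  by split => //; move: Qz => [u Qu <-]; exists u => //; rewrite -PQ; right.
- by move=> _ _ [u Pu <-] [v Qv <-] /hE; apply: nE.
- by exists (f p), p.
- by exists (f q), q.
Qed.

End GraphMaps.

(** * Confluent maps *)

Section Confluence.
Context {X Y : Type} (cloX : set X -> Prop) (EX : X -> X -> Prop)
  (cloY : set Y -> Prop) (EY : Y -> Y -> Prop).

Lemma confluent_of_neq0 (f : X -> Y) : epi EX EY f ->
  (forall Q, gconnected cloY EY Q -> forall L, gcomponent cloX EX (f @^-1` Q) L ->
     L !=set0 -> f @` L = Q) ->
  confluent cloX EX cloY EY f.
Proof.
move=> ef hf; split => // Q cQ L cL.
have [L0|nL] := pselect (L !=set0); first exact: hf.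
have [_ fs _] := ef.
apply/seteqP; split => [y [z Lz _]|q Qq]; exfalso; apply: nL; first by exists z.
by have [t ftq] := fs q; apply: (gcomponent_neq0 cL (z := t)); rewrite /= ftq.
Qed.

Lemma confluent_lift_edge (f : X -> Y) Q V a b :
  confluent cloX EX cloY EY f -> (forall Z, cloX (f @^-1` Z)) ->
  (forall u, EX u u) -> (forall c d, EY c d -> EY d c) ->
  gconnected cloY EY Q -> gcomponent cloX EX (f @^-1` Q) V ->
  Q a -> Q b -> EY a b ->
  exists u v, [/\ V u, V v, EX u v, f u = a & f v = b].
Proof.
move=> [_ fc] hclo refl sym cQ cV Qa Qb Eab.
have : (f @` V) a by rewrite (fc Q cQ V cV).
case=> p Vp fpa.
have [eab|ab] := pselect (a = b); first by subst b; exists p, p.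
have Qab : (f @^-1` [set a; b]) p by left.
pose L := gcomp cloX EX (f @^-1` [set a; b]) p.
have cL : gcomponent cloX EX (f @^-1` [set a; b]) L := gcomponent_gcomp cloX EX Qab.
have LV : L `<=` V.
  apply: (gcomponent_maximal cV); last by exists p; split => //; apply: gcomp_refl.
  - by move=> z Lz; case: (gcomp_sub Lz) => /= ->.
  - exact: gcomp_connected.
have cab : gconnected cloY EY [set a; b] by apply: gconnected_edge => //; apply: sym.
have : (f @` L) b by rewrite (fc _ cab _ cL); right.
case=> w Lw fwb.
have [_ cLc _] := cL.
have [] := @gconnected_cross_edge _ cloX EX L (f @^-1` [set a]) (f @^-1` [set b])
  cLc (hclo _) (hclo _).
- by move=> z Lz; case: (gcomp_sub Lz) => /= ->; [left|right].
- by apply/seteqP; split => // z [[_ /= ->]] /= ba; exact: ab.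
- by exists p; split => //; apply: gcomp_refl.
- by exists w.
by move=> u [v [Lu Lv fu fv Euv]]; exists u, v; split => //; apply: LV.
Qed.

End Confluence.

Lemma confluent_factor {X Y Z : Type} (cloX : set X -> Prop) (EX : X -> X -> Prop)
  (cloY : set Y -> Prop) (EY : Y -> Y -> Prop)
  (cloZ : set Z -> Prop) (EZ : Z -> Z -> Prop) (k : X -> Y) (g : X -> Z) (r : Y -> Z) :
  confluent cloX EX cloY EY k -> confluent cloX EX cloZ EZ g ->
  (forall t, g t = r (k t)) -> (forall W, cloY W -> cloX (k @^-1` W)) ->
  confluent cloY EY cloZ EZ r.
Proof.
move=> [[ke ks kE] kc] [[ge gs gE] gc] gr hclo.
apply: confluent_of_neq0; first split.
- by move=> c c' /kE [u [v [Euv <- <-]]]; rewrite -!gr; apply: ge.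
- by move=> z; have [t <-] := gs z; exists (k t); rewrite gr.
- move=> a b /gE [u [v [Euv <- <-]]]; exists (k u), (k v).
  by split; rewrite ?gr //; apply: ke.
move=> Q cQ L cL [d Ld].
have [p kpd] := ks d.
have [LS _ _] := cL.
have gp : (g @^-1` Q) p by rewrite /= gr kpd; apply: LS.
pose K := gcomp cloX EX (g @^-1` Q) p.
have kKL : k @` K `<=` L.
  apply: (gcomponent_maximal cL).
  - by move=> _ [c Kc <-]; move: (gcomp_sub Kc); rewrite /= gr.
  - by apply: (gconnected_image (cloX := cloX) (EX := EX)) => //; apply: gcomp_connected.
  - by exists d; split => //; exists p => //; apply: gcomp_refl.
apply/seteqP; split; first by move=> _ [y /LS Qy <-].
rewrite -(gc Q cQ K (gcomponent_gcomp cloX EX gp)) => _ [c Kc <-].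
by exists (k c); [apply: kKL; exists c | rewrite gr].
Qed.

(** * Surgery and restriction of finite graphs *)

Notation fin_confluent EA EB g := (confluent (@fin_closed _) (fun a b => EA a b)
  (@fin_closed _) (fun a b => EB a b) g).

Section Surgery.
Context (C : finType) (EC : rel C) (D : finType) (ED : rel D) (iota : D -> C)
  (C' : finType) (EC' : rel C') (r' : C' -> D).
Hypothesis ED_iota : forall a b, ED a b = EC (iota a) (iota b).
Hypothesis r'_conf : fin_confluent EC' ED r'.
Hypothesis C_graph : fin_conn_graph EC.
Hypothesis D_graph : fin_conn_graph ED.
Hypothesis C'_graph : fin_conn_graph EC'.

(* The induced copy [iota] of [D] in [C] is cut out and [C'] is glued in its
   place, each [e : C'] inheriting the outer edges of [iota (r' e)]. *)
Definition outside := {c : C | c \notin codom iota}.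
Definition surgery := (outside + C')%type.
Definition surgery_rel : rel surgery := fun z w =>
  match z, w with
  | inl a, inl b => EC (val a) (val b)
  | inr e, inr e' => EC' e e'
  | inl a, inr e => EC (val a) (iota (r' e))
  | inr e, inl a => EC (iota (r' e)) (val a)
  end.
Definition surgery_proj (z : surgery) : C :=
  match z with inl a => val a | inr e => iota (r' e) end.

Local Notation surgery_E := (fun z w => surgery_rel z w).

Lemma surgery_proj_range z : range iota (surgery_proj z) <-> range inr z.
Proof.
split; last by move=> [e _ <-]; exists (r' e).
case: z => [[c nc] [d _ /= dc]|e _]; last by exists e.
by exfalso; move: nc; rewrite -dc codom_f.
Qed.

Lemma surgery_rel_inl z a : surgery_rel z (inl a) = EC (surgery_proj z) (val a).
Proof. by case: z. Qed.

Lemma surgery_rel_sym : symmetric surgery_rel.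
Proof.
have [_ _ symC _] := C_graph; have [_ _ symC' _] := C'_graph.
by case=> [a|e] [b|e'] /=; [exact: symC | exact: symC | exact: symC | exact: symC'].
Qed.

Lemma surgery_rel_refl : reflexive surgery_rel.
Proof.
have [_ reflC _ _] := C_graph; have [_ reflC' _ _] := C'_graph.
by case=> [a|e] /=; [exact: reflC | exact: reflC'].
Qed.

Lemma surgery_epi : epi surgery_E (fun a b => EC a b) surgery_proj.
Proof.
have [[r'E r's r'ES] _] := r'_conf.
split.
- by case=> [a|e] [b|e'] //= h; rewrite -ED_iota; apply: r'E.
- move=> c; have [/codomP [d ->]|nc] := boolP (c \in codom iota).
    by have [e <-] := r's d; exists (inr e).
  by exists (inl (exist _ c nc)).
- move=> c c'.
  have [/codomP [d ->]|nc] := boolP (c \in codom iota);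
    have [/codomP [d' ->]|nc'] := boolP (c' \in codom iota) => Ecc'.
  + rewrite -ED_iota in Ecc'.
    by have [e [e' [Ee <- <-]]] := r'ES _ _ Ecc'; exists (inr e), (inr e').
  + have [e red] := r's d.
    by exists (inr e), (inl (exist _ c' nc')); split; rewrite //= red.
  + have [e red] := r's d'.
    by exists (inl (exist _ c nc)), (inr e); split; rewrite //= red.
  + by exists (inl (exist _ c nc)), (inl (exist _ c' nc')).
Qed.

Lemma surgery_component_inr Q L e d :
  gcomponent (@fin_closed _) surgery_E (surgery_proj @^-1` Q) L ->
  L (inr e) -> Q (iota d) -> ED (r' e) d -> exists2 e', L (inr e') & r' e' = d.
Proof.
have [_ _ symD _] := D_graph.
move=> cL Le Qd Eed; have [LS _ _] := cL.
have Qe : (iota @^-1` Q) (r' e) by apply: LS Le.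
pose Qi := gcomp (@fin_closed _) (fun a b => ED a b) (iota @^-1` Q) (r' e).
have Qid : Qi d.
  apply: (gcomp_max (Y := [set r' e; d])); [ | | by left | by right].
  - by move=> y [] ->.
  - by apply: gconnected_edge => //; rewrite symD.
have Qie : (r' @^-1` Qi) e by apply: gcomp_refl.
pose M := gcomp (@fin_closed _) (fun a b => EC' a b) (r' @^-1` Qi) e.
have cM := gcomponent_gcomp (@fin_closed _) (fun a b => EC' a b) Qie.
have cQi : gconnected (@fin_closed _) (fun a b => ED a b) Qi by apply: gcomp_connected.
have : (r' @` M) d by rewrite ((proj2 r'_conf) Qi cQi M cM).
case=> e' Me' <-; exists e' => //.
have MiL : inr @` M `<=` L.
  apply: (gcomponent_maximal cL).
  - by move=> _ [m Mm <-]; apply: (gcomp_sub (gcomp_sub Mm)).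
  - by apply: (gconnected_image (cloX := @fin_closed _) (EX := fun a b => EC' a b)) => //;
      case: cM.
  - by exists (inr e); split => //; exists e => //; apply: gcomp_refl.
by apply: MiL; exists e'.
Qed.

Lemma surgery_image_closed Q L q q' :
  gcomponent (@fin_closed _) surgery_E (surgery_proj @^-1` Q) L ->
  (surgery_proj @` L) q -> Q q' -> EC q q' -> (surgery_proj @` L) q'.
Proof.
move=> cL [z Lz <-] Qq' Ezq'.
have neighbour w : surgery_proj w = q' -> surgery_rel z w -> (surgery_proj @` L) q'.
  move=> wq' Ezw; exists w => //.
  apply: (gcomponent_neighbour cL Lz) => //; first by rewrite /= wq'.
  by rewrite surgery_rel_sym.
have [/codomP [d qd]|nq'] := boolP (q' \in codom iota); last first.
  by apply: (neighbour (inl (exist _ q' nq'))); rewrite ?surgery_rel_inl.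
subst q'; case: z Lz Ezq' neighbour => [a|e] Lz Ezq' neighbour.
  have [[_ r's _] _] := r'_conf; have [e' red] := r's d.
  by apply: (neighbour (inr e')); rewrite /= red.
rewrite /= -ED_iota in Ezq'.
by have [e' Le' <-] := surgery_component_inr cL Lz Qq' Ezq'; exists (inr e').
Qed.

Lemma surgery_conf : confluent (@fin_closed _) surgery_E
  (@fin_closed _) (fun a b => EC a b) surgery_proj.
Proof.
apply: confluent_of_neq0; first exact: surgery_epi.
move=> Q cQ L cL [z0 Lz0]; have [LS _ _] := cL.
have LQ : surgery_proj @` L `<=` Q by move=> _ [y /LS Qy <-].
apply/seteqP; split => //.
apply: (gconnected_edge_closed _ cQ LQ); first by [].
  by exists (surgery_proj z0), z0.
by move=> a b La Qb Eab; apply: surgery_image_closed La Qb Eab.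
Qed.

Lemma surgery_graph : fin_conn_graph surgery_rel.
Proof.
have [C'_gt0 _ _ cC'] := C'_graph; have [e0 _] := card_gt0P C'_gt0.
split; [by apply/card_gt0P; exists (inr e0) | exact: surgery_rel_refl
  | exact: surgery_rel_sym | ].
have Te0 : (surgery_proj @^-1` setT) (inr e0) by [].
pose L := gcomp (@fin_closed _) surgery_E (surgery_proj @^-1` setT) (inr e0).
have cL := gcomponent_gcomp (@fin_closed _) surgery_E Te0.
have [_ _ _ cC] := C_graph.
have projL := (proj2 surgery_conf) _ cC _ cL.
suff -> : [set: surgery] = L by case: cL.
apply/seteqP; split => // -[a|e] _.
- have : (surgery_proj @` L) (val a) by rewrite projL.
  case=> -[b|e] Lb /= h; first by rewrite (val_inj h) in Lb.
  by have := valP a; rewrite /= -h codom_f.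
- have C'L : inr @` setT `<=` L.
    apply: (gcomponent_maximal cL) => //.
    + exact: (gconnected_image (cloX := @fin_closed _) (EX := fun a b => EC' a b)).
    + by exists (inr e0); split; [exists e0 | apply: gcomp_refl].
  by apply: C'L; exists e.
Qed.

End Surgery.

Section Restriction.
Context (A : finType) (EA : rel A) (C : finType) (EC : rel C) (D : finType) (ED : rel D)
  (iota : D -> C) (r : A -> C) (a0 : A) (d0 : D).
Hypothesis iota_inj : injective iota.
Hypothesis ED_iota : forall a b, ED a b = EC (iota a) (iota b).
Hypothesis r_conf : fin_confluent EA EC r.
Hypothesis A_graph : fin_conn_graph EA.
Hypothesis C_graph : fin_conn_graph EC.
Hypothesis D_graph : fin_conn_graph ED.
Hypothesis r_a0 : r a0 = iota d0.

Local Notation finA := (@fin_closed A).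

Definition restr_set := gcomp finA (fun a b => EA a b) (r @^-1` range iota) a0.
Definition restr := {a : A | `[< restr_set a >]}.
Definition restr_rel : rel restr := fun a b => EA (val a) (val b).
(* [d0] is a junk value: [iota_inv] is only applied to points of [range iota]. *)
Definition iota_inv (c : C) : D := if [pick d | iota d == c] is Some d then d else d0.
Definition restr_proj (a : restr) : D := iota_inv (r (val a)).

Definition in_restr (a : A) (h : restr_set a) : restr := exist _ a (asboolT h).

Lemma restr_set_range a : restr_set a -> range iota (r a).
Proof. exact: gcomp_sub. Qed.

Lemma restr_set_a0 : restr_set a0.
Proof. by apply: gcomp_refl; exists d0. Qed.

Lemma restr_set_component :
  gcomponent finA (fun a b => EA a b) (r @^-1` range iota) restr_set.
Proof. by apply: gcomponent_gcomp; exists d0. Qed.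

Lemma restr_val (a : restr) : restr_set (val a).
Proof. exact/asboolP/(valP a). Qed.

Lemma image_val_restr : val @` [set: restr] = restr_set.
Proof.
apply/seteqP; split; first by move=> _ [a _ <-]; apply: restr_val.
by move=> a h; exists (in_restr h).
Qed.

Lemma iota_inv_range c : range iota c -> iota (iota_inv c) = c.
Proof.
move=> [d _ dc]; rewrite /iota_inv; case: pickP => [d' /eqP //|].
by move/(_ d); rewrite dc eqxx.
Qed.

Lemma iota_restr_proj a : iota (restr_proj a) = r (val a).
Proof. exact/iota_inv_range/restr_set_range/restr_val. Qed.

Lemma range_iota_connected : gconnected (@fin_closed C) (fun a b => EC a b) (range iota).
Proof.
apply: (gconnected_image (cloX := @fin_closed D) (EX := fun a b => ED a b)) => //.
- by move=> u v; rewrite ED_iota.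
- by case: D_graph.
Qed.

Lemma restr_graph : fin_conn_graph restr_rel.
Proof.
have [_ reflA symA _] := A_graph.
split.
- by apply/card_gt0P; exists (in_restr restr_set_a0).
- by move=> a; apply: reflA.
- by move=> a b; apply: symA.
- apply: (gconnected_of_image_inj (cloY := finA) (EY := fun a b => EA a b) (f := val)).
  + by [].
  + exact: val_inj.
  + by [].
  + by rewrite image_val_restr; case: restr_set_component.
Qed.

Lemma restr_proj_epi : epi (fun a b => restr_rel a b) (fun a b => ED a b) restr_proj.
Proof.
have [[rE _ _] rc] := r_conf.
have [_ reflA _ _] := A_graph; have [_ _ symC _] := C_graph.
have r_restr := rc _ range_iota_connected _ restr_set_component.
split.
- by move=> a b /rE; rewrite -!iota_restr_proj -ED_iota.
- move=> d; have : (r @` restr_set) (iota d) by rewrite r_restr; exists d.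
  case=> a h rad; exists (in_restr h); apply: iota_inj.
  by rewrite iota_restr_proj.
- move=> d d'; rewrite ED_iota => Edd'.
  have symC' c c' : EC c c' -> EC c' c by rewrite symC.
  have [a [a' [ha ha' Eaa' ra ra']]] := confluent_lift_edge r_conf (fun _ => I) reflA symC'
    range_iota_connected restr_set_component (ex_intro2 _ _ d I erefl)
    (ex_intro2 _ _ d' I erefl) Edd'.
  by exists (in_restr ha), (in_restr ha'); split => //; apply: iota_inj;
    rewrite iota_restr_proj ?ra ?ra'.
Qed.

Lemma restr_val_component Q M :
  gcomponent (@fin_closed restr) (fun a b => restr_rel a b) (restr_proj @^-1` Q) M ->
  M !=set0 -> gcomponent finA (fun a b => EA a b) (r @^-1` (iota @` Q)) (val @` M).
Proof.
move=> [MS cM mM] [m0 Mm0]; split.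
- by move=> _ [m Mm <-]; rewrite /= -iota_restr_proj; exists (restr_proj m) => //; apply: MS.
- exact: (gconnected_image (cloX := @fin_closed restr) (EX := fun a b => restr_rel a b)).
move=> W MW WS cW.
have Wrestr : W `<=` restr_set.
  apply: (gcomponent_maximal restr_set_component) => //.
  + by move=> w /WS [d _ h]; exists d.
  + by exists (val m0); split; [apply: MW; exists m0 | apply: restr_val].
pose W' : set restr := val @^-1` W.
have imW : val @` W' = W.
  apply/seteqP; split; first by move=> _ [w Ww <-].
  by move=> w Ww; exists (in_restr (Wrestr w Ww)).
suff <- : W' = M by [].
apply: mM => //.
- by move=> m Mm; apply: MW; exists m.
- move=> w W'w; have := WS _ W'w; rewrite /= -iota_restr_proj => -[d Qd /iota_inj dw].
  by rewrite /= -dw.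
- apply: (gconnected_of_image_inj (cloY := finA) (EY := fun a b => EA a b) (f := val)).
  + by [].
  + exact: val_inj.
  + by [].
  + by rewrite imW.
Qed.

Lemma restr_proj_conf : fin_confluent restr_rel ED restr_proj.
Proof.
apply: confluent_of_neq0; first exact: restr_proj_epi.
move=> Q cQ M cM M0; have [MS _ _] := cM.
have ciQ : gconnected (@fin_closed C) (fun a b => EC a b) (iota @` Q).
  apply: (gconnected_image (cloX := @fin_closed D) (EX := fun a b => ED a b)) => //.
  by move=> u v; rewrite ED_iota.
have rM := (proj2 r_conf) _ ciQ _ (restr_val_component cM M0).
apply/seteqP; split; first by move=> _ [m Mm <-]; apply: MS.
move=> q Qq; have : (r @` (val @` M)) (iota q) by rewrite rM; exists q.
case=> _ [m Mm <-] h; exists m => //; apply: iota_inj.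
by rewrite iota_restr_proj.
Qed.

End Restriction.

(** * Topological graphs *)

Section Topology.
Context {T : topologicalType}.

Lemma cont_fin_preimage_open (A : finType) (f : T -> A) (Z : set A) :
  cont_fin f -> open (f @^-1` Z).
Proof.
move=> cf; have -> : f @^-1` Z = \bigcup_(a in Z) (f @^-1` [set a]).
  by apply/seteqP; split => [t Zt|t [a Za /= ->]] //; exists (f t).
by apply: bigcup_open => a _; apply: cf.
Qed.

Lemma cont_fin_preimage_closed (A : finType) (f : T -> A) (Z : set A) :
  cont_fin f -> closed (f @^-1` Z).
Proof. by move=> cf; rewrite -openC preimage_setC; apply: cont_fin_preimage_open. Qed.

Lemma closure_sub_closed (K F : set T) : closed F -> K `<=` F -> closure K `<=` F.
Proof. by move=> cF KF z /(closureS KF); rewrite -(proj1 (closure_id F) cF). Qed.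

Lemma gconnected_closure (E : T -> T -> Prop) K :
  gconnected closed E K -> gconnected closed E (closure K).
Proof.
move=> cK /gdisconnectedP [P [Q [sp [p Pp] [q Qq]]]].
have [_ _ [C [cC PC]] [D [cD QD]] _] := sp.
have [KP|KQ] := gconnected_sub_separation cK (@subset_closure _ K) sp.
- have clC : closure K `<=` C by apply: closure_sub_closed => // z /KP; rewrite PC => -[].
  apply: (gseparation_disj sp (y := q)) => //.
  by move: Qq; rewrite QD PC => -[_ clq]; split => //; apply: clC.
- have clD : closure K `<=` D by apply: closure_sub_closed => // z /KQ; rewrite QD => -[].
  apply: (gseparation_disj sp (y := p)) => //.
  by move: Pp; rewrite PC QD => -[_ clp]; split => //; apply: clD.
Qed.

Lemma gcomponent_closed (E : T -> T -> Prop) S K :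
  closed S -> gcomponent closed E S K -> closed K.
Proof.
move=> cS [KS cK mK]; apply/closure_id/esym/mK; last exact: gconnected_closure.
  exact: subset_closure.
exact: closure_sub_closed.
Qed.

Lemma compact_decreasing_closed (S : nat -> set T) :
  compact [set: T] ->
  (forall n, closed (S n)) -> (forall n, S n !=set0) -> (forall n, S n.+1 `<=` S n) ->
  exists p, forall n, S n p.
Proof.
move=> cpt cS nS dS.
have S_le m n : (m <= n)%N -> S n `<=` S m.
  elim: n => [|n IH]; first by rewrite leqn0 => /eqP ->.
  rewrite leq_eqVlt => /orP [/eqP -> //|]; rewrite ltnS => /IH h z /dS; exact: h.
pose F := filter_from [set: nat] S.
have FF : Filter F.
  apply: filter_from_filter; first by exists 0%N.
  move=> i j _ _; exists (maxn i j) => // z Sz.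
  by split; [apply: (S_le i (maxn i j) (leq_maxl _ _)) | apply: (S_le j (maxn i j) (leq_maxr _ _))].
have PF : ProperFilter F by apply: filter_from_proper => n _; exact: nS.
have [p [_ clp]] := cpt F PF filterT.
exists p => n.
rewrite clusterE in clp.
have : closure (S n) p by apply: clp; exists n.
by rewrite -(proj1 (closure_id _) (cS n)).
Qed.

End Topology.

Section PseudoMetric.
Context {R : realType} {T : pseudoMetricType R}.

Lemma cont_fin_lebesgue (A : finType) (f : T -> A) :
  compact [set: T] -> cont_fin f ->
  exists2 d : R, 0 < d & forall p q, ball p d q -> f p = f q.
Proof.
move=> cpt cf; apply: contrapT => nex.
have far : forall d : R, 0 < d -> exists p q, ball p d q /\ f p <> f q.
  move=> d d0; apply: contrapT => nH; apply: nex; exists d => // p q bpq.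
  apply: contrapT => nf; apply: nH; by exists p, q.
pose B (d : R) := [set p | exists q, ball p d q /\ f p <> f q].
pose F := filter_from [set d : R | 0 < d] B.
have FF : Filter F.
  apply: filter_from_filter; first by exists 1; rewrite /= ltr01.
  move=> i j i0 j0; exists (Num.min i j); first by rewrite /= lt_min i0 j0.
  move=> p [q [bq nq]]; split; exists q; split => //;
    apply: (le_ball _ bq); rewrite ge_min lexx ?orbT //.
have PF : ProperFilter F.
  apply: filter_from_proper => // d d0; have [p [q h]] := far d d0; exists p, q.
have [p [_ clp]] := cpt F PF filterT.
have [e e0 be] : exists2 e : R, 0 < e & ball p e `<=` f @^-1` [set f p].
  have : nbhs p (f @^-1` [set f p]) by apply: open_nbhs_nbhs; split; [apply: cf | ].
  by move/nbhs_ballP => [e e0 h]; exists e.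
have e20 : 0 < e / 2 by rewrite divr_gt0.
have FB : F (B (e / 2)) by exists (e / 2).
have [p' [[q [bq nq]] bp']] := clp _ _ FB (nbhsx_ballx p (e / 2) e20).
apply: nq.
have fp' : f p' = f p.
  by apply: be; apply: (le_ball _ bp'); lra.
have fq : f q = f p.
  apply: be; rewrite [e]splitr; exact: ball_triangle bp' bq.
by rewrite fp' fq.
Qed.

Lemma zero_dimensional_ball_eq (p q : T) : zero_dimensional T ->
  (forall e : R, 0 < e -> ball p e q) -> p = q.
Proof.
move=> zd h; apply/eqP; apply: contraT => pq.
have [U [[oU _] Up nUq]] := zd _ _ pq.
have : nbhs p U by apply: open_nbhs_nbhs.
by move/nbhs_ballP => [e e0 /(_ q (h e e0))].
Qed.

Lemma closed_rel_ball_approx (E : T -> T -> Prop) :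
  closed [set p : T * T | E p.1 p.2] -> forall a b,
  (forall e : R, 0 < e -> exists u v, [/\ ball a e u, ball b e v & E u v]) -> E a b.
Proof.
move=> cE a b h.
have : closure [set p : T * T | E p.1 p.2] (a, b).
  move=> B [[Qa Rb] [/= /nbhs_ballP [e1 e10 s1] /nbhs_ballP [e2 e20 s2]] sB].
  have m0 : 0 < Num.min e1 e2 by rewrite lt_min e10 e20.
  have [u [v [bu bv Euv]]] := h _ m0.
  exists (u, v); split => //; apply: sB; split.
  - by apply: s1; apply: (le_ball _ bu); rewrite ge_min lexx.
  - by apply: s2; apply: (le_ball _ bv); rewrite ge_min lexx orbT.
by rewrite -(proj1 (closure_id _) cE).
Qed.

End PseudoMetric.

(** * Stages *)

Record stage (T : topologicalType) := Stage {
  st_C : finType; st_EC : rel st_C; st_Psi : T -> st_C;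
  st_D : finType; st_ED : rel st_D; st_iota : st_D -> st_C; st_phi : T -> st_D }.
Arguments st_EC {T} s. Arguments st_Psi {T} s. Arguments st_ED {T} s.
Arguments st_iota {T} s. Arguments st_phi {T} s.

Section Stages.
Context {R : realType} {T : pseudoMetricType R} (E : T -> T -> Prop).
Hypothesis HF : is_Fraisse_limit E.
Variable V : set T.

Definition stage_ok (st : stage T) : Prop :=
  [/\ fin_conn_graph (st_EC st), conf_epi_fin E (st_EC st) (st_Psi st),
      fin_conn_graph (st_ED st), conf_epi_fin E (st_ED st) (st_phi st) &
      [/\ injective (st_iota st),
          forall a b, st_ED st a b = st_EC st (st_iota st a) (st_iota st b) &
          gcomponent closed E (st_Psi st @^-1` range (st_iota st)) V]].

Definition refines (st st' : stage T) := exists r : st_C st' -> st_C st,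
  (forall t, st_Psi st t = r (st_Psi st' t)) /\
  (forall t, st_iota st (st_phi st t) = r (st_iota st' (st_phi st' t))).

Definition mesh_Psi (st : stage T) (e : R) :=
  forall p q, st_Psi st p = st_Psi st q -> V p -> V q -> ball p e q.

Definition mesh_phi (st : stage T) (e : R) :=
  forall p q, st_phi st p = st_phi st q -> ball p e q.

Lemma refines_trans st1 st2 st3 : refines st1 st2 -> refines st2 st3 -> refines st1 st3.
Proof.
move=> [r1 [h1 k1]] [r2 [h2 k2]]; exists (r1 \o r2).
by split => t /=; [rewrite h1 h2 | rewrite k1 k2].
Qed.

Lemma refines_mesh_phi st st' e :
  stage_ok st -> refines st st' -> mesh_phi st e -> mesh_phi st' e.
Proof.
move=> [_ _ _ _ [iota_inj _ _]] [r [_ rphi]] m p q pq; apply/m/iota_inj.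
by rewrite !rphi pq.
Qed.

Lemma stage_range_connected st : stage_ok st ->
  gconnected (@fin_closed _) (fun a b => st_EC st a b) (range (st_iota st)).
Proof.
move=> [_ _ [_ _ _ cD] _ [_ ED_iota _]].
apply: (gconnected_image (cloX := @fin_closed _) (EX := fun a b => st_ED st a b)) => //.
by move=> u v; rewrite ED_iota.
Qed.

Lemma stage_Psi_image st : stage_ok st -> st_Psi st @` V = range (st_iota st).
Proof.
move=> ok; have [_ [_ [_ Psi_conf]] _ _ [_ _ cV]] := ok.
exact: Psi_conf _ (stage_range_connected ok) _ cV.
Qed.

Lemma stage_lift_edge st a b : stage_ok st -> st_ED st a b ->
  exists u v, [/\ V u, V v, E u v, st_Psi st u = st_iota st a & st_Psi st v = st_iota st b].
Proof.
have [[_ [_ E_refl _]] _ _ _] := HF.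
move=> ok; have [[_ _ symC _] [Psi_cont Psi_conf] _ _ [_ ED_iota cV]] := ok.
rewrite ED_iota => Eab.
have clo Z : closed (st_Psi st @^-1` Z) by apply: cont_fin_preimage_closed.
have symC' c d : st_EC st c d -> st_EC st d c by rewrite symC.
have [u [v [Vu Vv Euv hu hv]]] := confluent_lift_edge Psi_conf clo E_refl symC'
  (stage_range_connected ok) cV (ex_intro2 _ _ a I erefl) (ex_intro2 _ _ b I erefl) Eab.
by exists u, v.
Qed.

Lemma stage_closed st : stage_ok st -> closed V.
Proof.
move=> [_ [Psi_cont _] _ _ [_ _ cV]].
by apply: (gcomponent_closed _ cV); apply: cont_fin_preimage_closed.
Qed.

Lemma fine_factorization (C : finType) (EC : rel C) (Psi : T -> C) (e : R) :
  conf_epi_fin E EC Psi -> 0 < e ->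
  exists (A : finType) (EA : rel A) (k : T -> A) (r : A -> C),
    [/\ fin_conn_graph EA, conf_epi_fin E EA k, fin_confluent EA EC r,
        forall t, Psi t = r (k t) & forall p q, k p = k q -> ball p e q].
Proof.
have [[[cpt _ _] _] _ _ fine_maps] := HF.
move=> [Psi_cont Psi_conf] e0.
have [d d0 hd] := cont_fin_lebesgue cpt Psi_cont.
have de0 : 0 < Num.min d e by rewrite lt_min d0 e0.
have [A [EA [k [gA [k_cont k_conf] mk]]]] := fine_maps _ de0.
have [[_ k_surj _] _] := k_conf.
have [sec secK] := choice k_surj.
(* [k] is finer than a Lebesgue number of [Psi], so [Psi] is constant on its fibres. *)
have Psi_k t : Psi t = Psi (sec (k t)).
  apply: hd; apply: (le_ball (e1 := Num.min d e)); first by rewrite ge_min lexx.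
  by apply: (mk (k t)); rewrite ?secK.
exists A, EA, k, (Psi \o sec); split => //.
- apply: (confluent_factor k_conf Psi_conf Psi_k) => W _.
  exact: cont_fin_preimage_closed.
- move=> p q kpq; apply: (le_ball (e1 := Num.min d e)); first by rewrite ge_min lexx orbT.
  exact: mk.
Qed.

Lemma refine_mesh_phi st e : stage_ok st -> 0 < e ->
  exists st', [/\ stage_ok st', refines st st' & mesh_phi st' e].
Proof.
have [_ _ amalgamate _] := HF.
case: st => C EC Psi D ED iota phi [/= gC cPsi gD cphi [iota_inj ED_iota cV]] e0.
have [A [EA [k [r' [gA ck r'_conf phi_k mk]]]]] := fine_factorization cphi e0.
have gS := surgery_graph ED_iota r'_conf gC gD gA.
have [Psi' [cPsi' Psi_Psi']] :=
  amalgamate _ _ _ _ gC gS Psi _ cPsi (surgery_conf ED_iota r'_conf gC gD gA).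
exists (Stage (surgery_rel EC EA r') Psi' EA inr k); split => //.
- split => //=; split => //=; first by move=> a b [].
  suff -> : Psi' @^-1` range inr = Psi @^-1` range iota by [].
  apply/seteqP; split => t /=; rewrite Psi_Psi' /=.
  + exact: (surgery_proj_range _ _).2.
  + exact: (surgery_proj_range _ _).1.
- by exists (surgery_proj r'); split => t; rewrite ?Psi_Psi' //= phi_k.
Qed.

Lemma refine_mesh_Psi st e x0 : stage_ok st -> 0 < e -> V x0 ->
  exists st', [/\ stage_ok st', refines st st' & mesh_Psi st' e].
Proof.
have [_ _ amalgamate _] := HF.
case: st => C EC Psi D ED iota phi [/= gC cPsi gD cphi [iota_inj ED_iota cV]] e0 Vx0.
have [A [EA [k [r [gA ck r_conf Psi_k mk]]]]] := fine_factorization cPsi e0.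
have [VS cVc mV] := cV.
have [d0 _ hd0] := VS _ Vx0.
have r_a0 : r (k x0) = iota d0 by rewrite -Psi_k hd0.
have restr_conf := restr_proj_conf iota_inj ED_iota r_conf gA gC gD r_a0.
have gK := restr_graph gA r_a0.
have [phi' [cphi' phi_phi']] := amalgamate _ _ _ _ gD gK phi _ cphi restr_conf.
exists (Stage EA k (@restr_rel _ EA _ _ iota r (k x0)) val phi'); split.
- split => //=; split => //=; first exact: val_inj.
  rewrite image_val_restr.
  have kV : k @` V `<=` restr_set EA iota r (k x0).
    apply: (gcomponent_maximal (restr_set_component _ r_a0)).
    + by move=> _ [v Vv <-]; have [d _ hd] := VS _ Vv; exists d; rewrite // hd Psi_k.
    + have [k_cont [[k_edge _ _] _]] := ck.
      apply: (gconnected_image (cloX := closed) (EX := E)) => // W _.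
      exact: cont_fin_preimage_closed.
    + by exists (k x0); split; [exists x0 | exact: (restr_set_a0 EA r_a0)].
  split => [v Vv|//|W VW WK cW]; first by apply: kV; exists v.
  by apply: mV => // w /WK /restr_set_range [d _ hd]; exists d; rewrite // Psi_k.
- by exists r; split => t; rewrite ?Psi_k // phi_phi' /= iota_restr_proj.
- by move=> p q kpq _ _; apply: mk.
Qed.

End Stages.

(** * The limit map *)

Definition eps {R : realType} (n : nat) : R := n.+1%:R^-1.

Lemma eps_gt0 {R : realType} n : 0 < eps n :> R.
Proof. by rewrite invr_gt0 ltr0n. Qed.

Lemma exists_eps_lt {R : realType} (e : R) : 0 < e -> exists n, eps n < e.
Proof.
move=> e0; exists (Num.truncn e^-1).
by rewrite /eps invf_plt ?unfold_in //= ?ltr0n // -truncn_le_nat.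
Qed.

Lemma ball_of_eps {R : realType} {T : pseudoMetricType R} (p q : T) :
  (forall n, ball p (eps n) q) -> forall e, 0 < e -> ball p e q.
Proof. by move=> h e /exists_eps_lt [n /ltW ne]; apply: le_ball ne _ (h n). Qed.

Section LimitMap.
Context {R : realType} {T : pseudoMetricType R} (E : T -> T -> Prop).
Hypothesis HF : is_Fraisse_limit E.
Variables (V : set T) (sq : nat -> stage T).
Hypothesis sq_ok : forall n, stage_ok E V (sq n).
Hypothesis sq_refines : forall n, refines (sq n) (sq n.+1).
Hypothesis sq_mesh_Psi : forall n, mesh_Psi V (sq n.+1) (eps n).
Hypothesis sq_mesh_phi : forall n, mesh_phi (sq n.+1) (eps n).

Definition fibre n t : set T :=
  V `&` (st_Psi (sq n) @^-1` [set st_iota (sq n) (st_phi (sq n) t)]).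

Lemma fibre_Psi n t y : fibre n t y -> st_Psi (sq n) y = st_iota (sq n) (st_phi (sq n) t).
Proof. by case. Qed.

Lemma fibre_decr n t : fibre n.+1 t `<=` fibre n t.
Proof.
have [r [rPsi riota]] := sq_refines n.
by move=> y [Vy hy]; split => //=; rewrite rPsi /= hy -riota.
Qed.

Lemma fibre_neq0 n t : fibre n t !=set0.
Proof.
have : (st_Psi (sq n) @` V) (st_iota (sq n) (st_phi (sq n) t)).
  by rewrite (stage_Psi_image (sq_ok n)); exists (st_phi (sq n) t).
by case=> y Vy hy; exists y.
Qed.

Lemma fibre_closed n t : closed (fibre n t).
Proof.
apply: closedI; first exact: (stage_closed (sq_ok n)).
by apply: cont_fin_preimage_closed; have [_ []] := sq_ok n.
Qed.

Lemma fibre_ball n t t' y y' : fibre n.+1 t y -> fibre n.+1 t' y' ->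
  st_phi (sq n.+1) t = st_phi (sq n.+1) t' -> ball y (eps n) y'.
Proof.
move=> [Vy hy] [Vy' hy'] tt'.
by apply: sq_mesh_Psi => //; rewrite hy hy' tt'.
Qed.

Definition limit_map t := xget t [set y | forall n, fibre n t y].

Lemma limit_mapP t n : fibre n t (limit_map t).
Proof.
have [[[cpt _ _] _] _ _ _] := HF.
suff : exists y, forall m, fibre m t y by move/(xgetPex t)/(_ n).
apply: compact_decreasing_closed cpt _ _ _ => m.
- exact: fibre_closed.
- exact: fibre_neq0.
- exact: fibre_decr.
Qed.

Lemma limit_map_unique t y : (forall n, fibre n t y) -> limit_map t = y.
Proof.
have [[[_ _ zd] _] _ _ _] := HF.
move=> hy; apply: (zero_dimensional_ball_eq zd); apply: ball_of_eps => n.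
exact: fibre_ball (limit_mapP t n.+1) (hy n.+1) erefl.
Qed.

Lemma limit_map_image : limit_map @` setT = V.
Proof.
have [[[cpt _ _] _] _ _ _] := HF.
apply/seteqP; split; first by move=> _ [t _ <-]; case: (limit_mapP t 0).
move=> v Vv.
pose over n := st_phi (sq n) @^-1` [set d | st_iota (sq n) d = st_Psi (sq n) v].
have [t ht] : exists t, forall n, over n t.
  apply: compact_decreasing_closed cpt _ _ _ => n.
  - by apply: cont_fin_preimage_closed; have [_ _ _ []] := sq_ok n.
  - have [_ _ _ [_ [[_ phi_surj _] _]] [_ _ [VS _ _]]] := sq_ok n.
    have [d _ hd] := VS _ Vv; have [t ht] := phi_surj d.
    by exists t; rewrite /over /= ht.
  - have [r [rPsi riota]] := sq_refines n.
    by move=> t h; rewrite /over /= riota h -rPsi.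
by exists t => //; apply: limit_map_unique => n; split => //; rewrite /= (ht n).
Qed.

Lemma limit_map_continuous : continuous limit_map.
Proof.
move=> t; apply/cvg_ballP => e e0; have [n /ltW ne] := exists_eps_lt e0.
have [_ _ _ [phi_cont _] _] := sq_ok n.+1.
have : nbhs t (st_phi (sq n.+1) @^-1` [set st_phi (sq n.+1) t]).
  by apply: open_nbhs_nbhs; split => //; apply: cont_fin_preimage_open.
apply: filterS => t' ht'; apply: (le_ball ne).
exact: fibre_ball (limit_mapP t n.+1) (limit_mapP t' n.+1) (esym ht').
Qed.

Lemma limit_map_injective : injective limit_map.
Proof.
have [[[_ _ zd] _] _ _ _] := HF.
move=> t t' tt'; apply: (zero_dimensional_ball_eq zd); apply: ball_of_eps => n.
apply: sq_mesh_phi; have [_ _ _ _ [iota_inj _ _]] := sq_ok n.+1; apply: iota_inj.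
by rewrite -(fibre_Psi (limit_mapP t n.+1)) -(fibre_Psi (limit_mapP t' n.+1)) tt'.
Qed.

Lemma limit_map_edge u v : E u v -> E (limit_map u) (limit_map v).
Proof.
have [[_ [cE _ _]] _ _ _] := HF.
move=> Euv; apply: (closed_rel_ball_approx cE) => e e0.
have [n /ltW ne] := exists_eps_lt e0.
have [_ _ _ [_ [[phi_edge _ _] _]] _] := sq_ok n.+1.
have [a [b [Va Vb Eab ha hb]]] := stage_lift_edge HF (sq_ok n.+1) (phi_edge _ _ Euv).
exists a, b; split => //; apply: (le_ball ne).
- exact: fibre_ball (limit_mapP u n.+1) (conj Va ha) erefl.
- exact: fibre_ball (limit_mapP v n.+1) (conj Vb hb) erefl.
Qed.

Lemma limit_map_edge_onto a b : V a -> V b -> E a b ->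
  exists u v, [/\ E u v, limit_map u = a & limit_map v = b].
Proof.
have [[_ [cE _ _]] _ _ _] := HF.
rewrite -limit_map_image => -[t _ <-] [t' _ <-] Ett'.
exists t, t'; split => //; apply: (closed_rel_ball_approx cE) => e e0.
have [n /ltW ne] := exists_eps_lt e0.
have [_ [_ [[Psi_edge _ _] _]] _ [_ [[_ _ phi_lift] _]] [_ ED_iota _]] := sq_ok n.+1.
have := Psi_edge _ _ Ett'.
rewrite (fibre_Psi (limit_mapP t n.+1)) (fibre_Psi (limit_mapP t' n.+1)) -ED_iota.
move=> /phi_lift [u [v [Euv hu hv]]].
by exists u, v; split => //; apply: (le_ball ne); apply: sq_mesh_phi; rewrite ?hu ?hv.
Qed.

Lemma limit_map_iso : iso_onto_subgraph E V.
Proof.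
exists limit_map; split.
- exact: limit_map_continuous.
- exact: limit_map_injective.
- exact: limit_map_image.
- exact: limit_map_edge.
- exact: limit_map_edge_onto.
Qed.

End LimitMap.

Lemma stage_sequence {R : realType} {T : pseudoMetricType R} (E : T -> T -> Prop)
  (V : set T) (x0 : T) (st0 : stage T) :
  is_Fraisse_limit E -> V x0 -> stage_ok E V st0 ->
  exists sq : nat -> stage T,
    [/\ forall n, stage_ok E V (sq n), forall n, refines (sq n) (sq n.+1),
        forall n, mesh_Psi V (sq n.+1) (eps n) & forall n, mesh_phi (sq n.+1) (eps n)].
Proof.
move=> HF Vx0 ok0.
have step (p : stage T * nat) : exists st', stage_ok E V p.1 ->
    [/\ stage_ok E V st', refines p.1 st', mesh_Psi V st' (eps p.2)
      & mesh_phi st' (eps p.2)].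
  case: p => st n; have [ok|nok] := pselect (stage_ok E V st); last by exists st => /nok.
  have [st1 [ok1 ref1 m1]] := refine_mesh_phi HF ok (eps_gt0 n).
  have [st2 [ok2 ref2 m2]] := refine_mesh_Psi HF ok1 (eps_gt0 n) Vx0.
  exists st2 => _; split => //; first exact: refines_trans ref1 ref2.
  exact: refines_mesh_phi ok1 ref2 m1.
have [next hnext] := choice step.
pose sq := fix sq n := if n is n'.+1 then next (sq n', n') else st0.
have ok n : stage_ok E V (sq n).
  by elim: n => [|n IH] //=; have [] := hnext (sq n, n) IH.
by exists sq; split => n; have [] := hnext (sq n, n) (ok n).
Qed.

Lemma unit_graph : fin_conn_graph (fun _ _ : unit => true).
Proof.
split => //; first by rewrite card_unit.
move=> /gdisconnectedP [P [Q [sp [[] Pt] [[] Qt]]]].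
exact: gseparation_disj sp Pt Qt.
Qed.

Lemma conf_epi_fin_unit {T : topologicalType} (E : T -> T -> Prop) x :
  E x x -> conf_epi_fin E (fun _ _ : unit => true) (fun _ : T => tt).
Proof.
move=> Exx; split.
  move=> []; suff -> : (fun _ : T => tt) @^-1` [set tt] = setT by exact: openT.
  by apply/seteqP; split.
apply: confluent_of_neq0; first by split => // [[]|[] []]; [exists x | exists x, x].
move=> Q _ L [LQ _ _] [t Lt].
by apply/seteqP; split => [[] _|[] _]; [apply: (LQ t) | exists t].
Qed.

Lemma initial_stage_ok {R : realType} {T : pseudoMetricType R} (E : T -> T -> Prop)
  (A : finType) (EA : rel A) (f : T -> A) x :
  (forall x, E x x) -> fin_conn_graph EA -> conf_epi_fin E EA f ->
  stage_ok E (gcomp closed E (f @^-1` [set f x]) x)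
    (Stage EA f (fun _ _ : unit => true) (fun _ => f x) (fun _ => tt)).
Proof.
move=> E_refl gA cf; split => //=.
- exact: unit_graph.
- exact: (conf_epi_fin_unit (E_refl x)).
split => //=; first by move=> [] [].
  by move=> [] []; have [_ reflA _ _] := gA; rewrite reflA.
have -> : f @^-1` range (fun _ : unit => f x) = f @^-1` [set f x].
  by apply/seteqP; split => t /= [] //; exists tt.
exact: gcomponent_gcomp.
Qed.

Theorem mainTheorem12 (R : realType) (T : pseudoMetricType R)
  (E : T -> T -> Prop) :
  is_Fraisse_limit E ->
  forall (x : T) (U : set T), nbhs x U ->
  exists V : set T, [/\ closed V, V x, V `<=` U & iso_onto_subgraph E V].
Proof.
move=> HF x U /nbhs_ballP [e e0 eU].
have [[_ [_ E_refl _]] _ _ fine_maps] := HF.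
have [A [EA [f [gA cf mf]]]] := fine_maps _ e0.
pose V := gcomp closed E (f @^-1` [set f x]) x.
have Vx : V x by apply: gcomp_refl.
have ok0 := initial_stage_ok x E_refl gA cf.
have [sq [ok ref mPsi mphi]] := stage_sequence HF Vx ok0.
exists V; split => //.
- exact: stage_closed ok0.
- by move=> v Vv; apply/eU/(mf (f x) x v) => //; apply: gcomp_sub Vv.
- exact: (limit_map_iso HF ok ref mPsi mphi).
Qed.
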